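(* Let $p$ be a prime, let $\boldsymbol{\alpha}=(\alpha_1,\ldots,\alpha_r)$ be a basis for a finite abelian $p$-group $G$, and let $j,j',k',k$ be integers with $0\le j\le j'<k'\le k$. Let $\beta\in G(j,k)$. Then: (i) If $\mathbf{x}={\rm DL}_{\boldsymbol{\alpha}}(k',k,\beta^{p^{k'-j}})$ and $\gamma=\beta^{p^{j'-j}}\boldsymbol{\alpha}(j',k)^{-\mathbf{x}}$, then $\gamma\in G(j',k')$. (ii) If moreover $\mathbf{v}={\rm DL}_{\boldsymbol{\alpha}}(j',k',\gamma)$ and $\mathbf{s}=\mathbf{q}(j',k')/\mathbf{q}(j',k)$ (componentwise quotient), then $\mathbf{s}\mathbf{v}+\mathbf{x}={\rm DL}_{\boldsymbol{\alpha}}(j',k,\beta^{p^{j'-j}})$.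
   Context: A vector $\boldsymbol{\gamma}=(\gamma_1,\ldots,\gamma_s)$ of group elements (trivial entries allowed) is a basis for $\langle\boldsymbol{\gamma}\rangle$ if every $\beta\in\langle\boldsymbol{\gamma}\rangle$ can be written uniquely as $\boldsymbol{\gamma}^{\mathbf{x}}=\gamma_1^{x_1}\cdots\gamma_s^{x_s}$ with $0\le x_i<|\gamma_i|$; then ${\rm DL}(\boldsymbol{\gamma},\beta)=\mathbf{x}$, regarded as an element of $R_{\boldsymbol{\gamma}}=\prod_i\mathbb{Z}/|\gamma_i|\mathbb{Z}$ (integer vectors are identified with their reductions; exponentiation by an element of $R_{\boldsymbol{\gamma}}$ uses representatives). For nonnegative integers $a<b$: $G(a,b)=\{\beta^{p^a}:\beta\in G,\ \beta^{p^b}=1_G\}$; with $n_i=\log_p|\alpha_i|$ and $q_i=p^{\,a+\max(0,n_i-b)}$, $\mathbf{q}(a,b)=(q_1,\ldots,q_r)$ and $\boldsymbol{\alpha}(a,b)=(\alpha_1^{q_1},\ldots,\alpha_r^{q_r})$ (a basis of $G(a,b)$); ${\rm DL}_{\boldsymbol{\alpha}}(a,b,\delta)$ denotes ${\rm DL}(\boldsymbol{\alpha}(a,b),\delta)$ for $\delta\in G(a,b)$. Vector products such as $\mathbf{s}\mathbf{v}$ are componentwise. *)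

From mathcomp Require Import all_boot all_fingroup all_solvable.
Set Implicit Arguments. Unset Strict Implicit. Unset Printing Implicit Defensive.
Local Open Scope group_scope.

Section Defs.
Variable gT : finGroupType.

Definition vexp (r : nat) (g : 'I_r -> gT) (x : 'I_r -> nat) : gT :=
  \prod_(i < r) (g i ^+ x i).

Definition vexpN (r : nat) (g : 'I_r -> gT) (x : 'I_r -> nat) : gT :=
  \prod_(i < r) (g i ^+ x i)^-1.

Definition is_basis (r : nat) (g : 'I_r -> gT) : Prop :=
  forall b, b \in <<[set g i | i : 'I_r]>> ->
    (exists x : 'I_r -> nat, (forall i, x i < #[g i])%N /\ vexp g x = b) /\
    (forall x y : 'I_r -> nat, (forall i, x i < #[g i])%N -> (forall i, y i < #[g i])%N ->
        vexp g x = b -> vexp g y = b -> forall i, x i = y i).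

(* DL(g, b): the representative vector x (0 <= x_i < |g_i|) with g^x = b;
   (the zero vector if no such x exists, i.e. outside its domain). *)
Definition DL (r : nat) (g : 'I_r -> gT) (b : gT) : 'I_r -> nat :=
  let N := (\max_(i < r) #[g i])%N in
  match [pick x : {ffun 'I_r -> 'I_N} |
           [forall i, (x i < #[g i])%N] && (vexp g (fun i => nat_of_ord (x i)) == b)] with
  | Some x => fun i => nat_of_ord (x i)
  | None => fun _ => 0%N
  end.

Definition Gab (p a b : nat) (G : {set gT}) : {set gT} :=
  [set y ^+ (p ^ a)%N | y in [set z in G | z ^+ (p ^ b)%N == 1]].

Definition qab (p : nat) (r : nat) (alpha : 'I_r -> gT) (a b : nat) (i : 'I_r) : nat :=
  (p ^ (a + (logn p #[alpha i] - b)))%N.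

Definition alphab (p : nat) (r : nat) (alpha : 'I_r -> gT) (a b : nat) (i : 'I_r) : gT :=
  alpha i ^+ qab p alpha a b i.

End Defs.

(* Write beta = y^(p^j) with y^(p^k) = 1.  Every element killed by p^b has its
   p^a-th power in the span of alpha(a,b), so x is well defined and equals the
   coordinates of y^(p^k') in the basis alpha(k',k).  The element
   w := y * (alpha(0,k)^x)^-1 then satisfies w^(p^a) = y^(p^a) (alpha(a,k)^x)^-1
   for every a; hence w^(p^k') = 1 and gamma = w^(p^j') lies in G(j',k').
   Finally y^(p^j') = gamma * alpha(j',k)^x, and comparing coordinates in the
   basis alpha, where alpha(j',k')_i = alpha(j',k)_i ^ s_i, gives (ii). *)
From mathcomp Require Import all_boot all_fingroup all_solvable.
Set Implicit Arguments. Unset Strict Implicit. Unset Printing Implicit Defensive.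
Local Open Scope group_scope.

Section AbelianProducts.
Variables (gT : finGroupType) (G : {group gT}).
Hypothesis cGG : abelian G.

Lemma prodgM_abelian (I : Type) (s : seq I) (f g : I -> gT) :
  (forall i, f i \in G) -> (forall i, g i \in G) ->
  \prod_(i <- s) (f i * g i) = \prod_(i <- s) f i * \prod_(i <- s) g i.
Proof.
move=> fG gG; elim: s => [|a s IHs]; first by rewrite !big_nil mulg1.
rewrite !big_cons IHs !mulgA; congr (_ * _); rewrite -!mulgA; congr (_ * _).
by apply: (centsP cGG) => //; apply: group_prod.
Qed.

Lemma prodgX_abelian (I : Type) (s : seq I) (f : I -> gT) m :
  (forall i, f i \in G) -> \prod_(i <- s) f i ^+ m = (\prod_(i <- s) f i) ^+ m.
Proof.
move=> fG; elim: s => [|a s IHs]; first by rewrite !big_nil expg1n.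
by rewrite !big_cons IHs expgMn //; apply: (centsP cGG) => //; apply: group_prod.
Qed.

Lemma prodgV_abelian (I : Type) (s : seq I) (f : I -> gT) :
  (forall i, f i \in G) -> \prod_(i <- s) (f i)^-1 = (\prod_(i <- s) f i)^-1.
Proof.
move=> fG; apply/eqP; rewrite eq_sym eq_invg_mul -prodgM_abelian //.
  by apply/eqP/big1 => i _; rewrite mulgV.
by move=> i; rewrite groupV.
Qed.

Variables (r : nat) (g : 'I_r -> gT).
Hypothesis gG : forall i, g i \in G.

Let gXG (e : 'I_r -> nat) i : g i ^+ e i \in G.
Proof. by rewrite groupX. Qed.

Lemma vexp_mem e : vexp g e \in G.
Proof. exact: group_prod. Qed.

Lemma vexpD e f : vexp g e * vexp g f = vexp g (fun i => e i + f i)%N.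
Proof.
by rewrite /vexp -prodgM_abelian //; apply: eq_bigr => i _; rewrite expgD.
Qed.

Lemma vexpX e m : vexp g e ^+ m = vexp g (fun i => e i * m)%N.
Proof.
by rewrite /vexp -prodgX_abelian //; apply: eq_bigr => i _; rewrite expgM.
Qed.

Lemma vexpNE e : vexpN g e = (vexp g e)^-1.
Proof. exact: prodgV_abelian. Qed.

End AbelianProducts.

Lemma vexp_expg (gT : finGroupType) r (g : 'I_r -> gT) (q e : 'I_r -> nat) :
  vexp (fun i => g i ^+ q i) e = vexp g (fun i => q i * e i)%N.
Proof. by apply: eq_bigr => i _; rewrite expgM. Qed.

Lemma vexp_DL (gT : finGroupType) r (g : 'I_r -> gT) (e : 'I_r -> nat) b :
  vexp g e = b -> vexp g (DL g b) = b.
Proof.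
move=> geb; pose N := (\max_(i < r) #[g i])%N.
have e_lt i : (e i %% #[g i] < N)%N.
  by apply: leq_trans (leq_bigmax i); rewrite ltn_pmod.
rewrite /DL; case: pickP => [z /andP[_ /eqP //] | noDL].
have /negP[] := noDL [ffun i => Ordinal (e_lt i)].
apply/andP; split; first by apply/forallP => i; rewrite ffunE ltn_pmod.
rewrite -geb /vexp; apply/eqP/eq_bigr => i _.
by rewrite ffunE expg_mod_order.
Qed.

Lemma qab_dvdn (gT : finGroupType) p r (alpha : 'I_r -> gT) a b b' i :
  (b <= b')%N -> (qab p alpha a b' i %| qab p alpha a b i)%N.
Proof. by move=> le_bb'; rewrite dvdn_exp2l // leq_add2l leq_sub2l. Qed.

Section PGroupBasis.
Variables (gT : finGroupType) (G : {group gT}) (p r : nat) (alpha : 'I_r -> gT).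
Hypotheses (p_pr : prime p) (cGG : abelian G) (pG : p.-group G)
  (genG : <<[set alpha i | i : 'I_r]>> = G) (basis_alpha : is_basis alpha).

Lemma basis_mem i : alpha i \in G.
Proof. by rewrite -genG mem_gen // imset_f. Qed.

Lemma alphab_mem a b i : alphab p alpha a b i \in G.
Proof. by rewrite groupX ?basis_mem. Qed.

Lemma order_basis i : #[alpha i] = (p ^ logn p #[alpha i])%N.
Proof. by rewrite -p_part part_pnat_id //; apply: mem_p_elt pG (basis_mem i). Qed.

Lemma vexp_basis_inj e f :
  vexp alpha e = vexp alpha f -> forall i, alpha i ^+ e i = alpha i ^+ f i.
Proof.
move=> eq_ef i; pose red h k := (h k %% #[alpha k])%N.
have red_lt h k : (red h k < #[alpha k])%N by rewrite ltn_pmod.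
have vexp_red h : vexp alpha (red h) = vexp alpha h.
  by apply: eq_bigr => k _; rewrite expg_mod_order.
have ef_span : vexp alpha e \in <<[set alpha i | i : 'I_r]>>.
  by rewrite genG (vexp_mem basis_mem).
have [_ uniq_coord] := basis_alpha ef_span.
have red_ef := uniq_coord _ _ (red_lt e) (red_lt f) (vexp_red e) _ i.
rewrite -[alpha i ^+ e i]expg_mod_order -[alpha i ^+ f i]expg_mod_order.
by rewrite [_ %% _]red_ef // vexp_red eq_ef.
Qed.

Lemma alphab_exp a b e :
  vexp (alphab p alpha a b) e = vexp (alphab p alpha 0 b) e ^+ (p ^ a).
Proof.
rewrite /alphab !vexp_expg (vexpX cGG basis_mem) /vexp.
by apply: eq_bigr => i _; rewrite /qab add0n expnD -mulnA mulnC.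
Qed.

Lemma expn_in_span_alphab a b w : w \in G -> w ^+ (p ^ b) = 1 ->
  exists e, w ^+ (p ^ a) = vexp (alphab p alpha a b) e.
Proof.
rewrite -{1}genG => wG wb; have [[c [_ alpha_c]] _] := basis_alpha wG.
pose n i := logn p #[alpha i].
have dvd_c i : (p ^ (n i - b) %| c i)%N.
  have: alpha i ^+ (c i * p ^ b) = alpha i ^+ 0.
    apply: (@vexp_basis_inj (fun i => c i * p ^ b)%N (fun _ => 0%N)).
    by rewrite -(vexpX cGG basis_mem) alpha_c wb; apply/esym/big1 => k _.
  rewrite expg0 => /eqP; rewrite -order_dvdn order_basis -/(n i).
  case: (leqP (n i) b) => [|lt_b_n]; first by rewrite -subn_eq0 => /eqP ->.
  by rewrite -{1}(subnK (ltnW lt_b_n)) expnD dvdn_pmul2r // expn_gt0 prime_gt0.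
exists (fun i => c i %/ p ^ (n i - b))%N.
rewrite -alpha_c (vexpX cGG basis_mem) /alphab vexp_expg /vexp.
apply: eq_bigr => i _; congr (_ ^+ _).
by rewrite /qab expnD -mulnA (mulnC _ (_ %/ _)) divnK // mulnC.
Qed.

Lemma vexp_alphab_DL a b w : w \in G -> w ^+ (p ^ b) = 1 ->
  vexp (alphab p alpha a b) (DL (alphab p alpha a b) (w ^+ (p ^ a))) = w ^+ (p ^ a).
Proof.
by move=> wG wb; have [e ->] := expn_in_span_alphab a wG wb; apply: vexp_DL.
Qed.

Lemma alphab_coord a b b' (v e d : 'I_r -> nat) : (b' <= b)%N ->
    vexp (alphab p alpha a b') v * vexp (alphab p alpha a b) e =
      vexp (alphab p alpha a b) d ->
  forall i, (qab p alpha a b' i %/ qab p alpha a b i * v i + e i = d i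
               %[mod #[alphab p alpha a b i]])%N.
Proof.
move=> le_b'b; rewrite /alphab !vexp_expg (vexpD cGG basis_mem) => eq_coord i.
have := vexp_basis_inj eq_coord i; rewrite -{1}(divnK (qab_dvdn p alpha a i le_b'b)).
rewrite (mulnC (_ %/ _)) -mulnA -mulnDr !expgM => eq_i.
by apply/eqP; rewrite -eq_expg_mod_order /alphab eq_i.
Qed.

End PGroupBasis.

Theorem lemma2 (gT : finGroupType) (p : nat) (G : {group gT}) (r : nat)
    (alpha : 'I_r -> gT) (j j' k' k : nat) (beta : gT) :
  prime p -> abelian G -> p.-group G ->
  <<[set alpha i | i : 'I_r]>> = G -> is_basis alpha ->
  (j <= j')%N -> (j' < k')%N -> (k' <= k)%N ->
  beta \in Gab p j k G ->
  let x := DL (alphab p alpha k' k) (beta ^+ (p ^ (k' - j))%N) in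
  let gamma := beta ^+ (p ^ (j' - j))%N * vexpN (alphab p alpha j' k) x in
  gamma \in Gab p j' k' G /\
  (let v := DL (alphab p alpha j' k') gamma in
   let s := fun i => (qab p alpha j' k' i %/ qab p alpha j' k i)%N in
   forall i : 'I_r,
     (s i * v i + x i = DL (alphab p alpha j' k) (beta ^+ (p ^ (j' - j))%N) i
       %[mod #[alphab p alpha j' k i]])%N).
Proof.
move=> p_pr cGG pG genG basis_alpha le_jj' lt_j'k' le_k'k.
case/imsetP=> y; rewrite inE => /andP[yG /eqP yk] -> x gamma.
have DL_coord := vexp_alphab_DL p_pr cGG pG genG basis_alpha.
have vexp_alphab_mem a b e : vexp (alphab p alpha a b) e \in G.
  exact: vexp_mem (alphab_mem p genG a b) e.
have yX m : (j <= m)%N -> (y ^+ (p ^ j)) ^+ (p ^ (m - j)) = y ^+ (p ^ m).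
  by move=> le_jm; rewrite -expgM -expnD subnKC.
have x_coord : vexp (alphab p alpha k' k) x = y ^+ (p ^ k').
  by rewrite /x yX ?(leq_trans le_jj' (ltnW lt_j'k')) ?DL_coord.
pose w := y * (vexp (alphab p alpha 0 k) x)^-1.
have wG : w \in G by rewrite groupM ?groupV.
have wX a : w ^+ (p ^ a) = y ^+ (p ^ a) * (vexp (alphab p alpha a k) x)^-1.
  rewrite expgMn ?expgVn -?(alphab_exp p cGG genG) //.
  by apply: (centsP cGG); rewrite ?groupV.
have gammaE : gamma = w ^+ (p ^ j').
  by rewrite /gamma (vexpNE cGG (alphab_mem p genG j' k)) wX yX.
have wk' : w ^+ (p ^ k') = 1 by rewrite wX x_coord mulgV.
split; first by rewrite gammaE; apply/imsetP; exists w; rewrite // inE wG wk' eqxx.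
move=> v s i; rewrite /s; apply: (alphab_coord cGG genG basis_alpha le_k'k).
by rewrite /v yX // gammaE !DL_coord // wX mulgKV.
Qed.
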